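(* For every $k\in\mathbb{N}$, $Q(2,2k;2)=(-1)^k(k!)^2$, that is, \[ \sum_{\ell=0}^{2k}(\ell+1)\,s(2k+1,\ell+1)\,k^{\ell}=(-1)^k(k!)^2. \]
   Context: $s(n,k)$ denotes the signed Stirling numbers of the first kind, defined by $\frac{[\ln(1+x)]^k}{k!}=\sum_{n=k}^\infty s(n,k)\frac{x^n}{n!}$ for $|x|<1$; equivalently $\prod_{j=0}^{n-1}(z-j)=\sum_{k=0}^n s(n,k)z^k$. For $m\in\mathbb{N}$, $k\in\mathbb{N}_0$ and $\alpha\in\mathbb{R}$, $Q(m,k;\alpha)=\sum_{\ell=0}^{k}\binom{m+\ell-1}{m-1}s(m+k-1,m+\ell-1)\left(\frac{m+k-\alpha}{2}\right)^{\ell}$. *)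

From HB Require Import structures.
From mathcomp Require Import all_boot all_order all_algebra.
Set Implicit Arguments. Unset Strict Implicit. Unset Printing Implicit Defensive.
Import Order.TTheory GRing.Theory Num.Theory.
Local Open Scope ring_scope.

(* Signed Stirling numbers of the first kind, via
   prod_{j=0}^{n-1} (z - j) = sum_k s(n,k) z^k. *)
Definition stirling1 (n k : nat) : int :=
  (\prod_(j < n) ('X - (j%:R)%:P) : {poly int})`_k.

Definition Q (R : realFieldType) (m k : nat) (alpha : R) : R :=
  \sum_(l < k.+1)
     ('C(m + l - 1, m - 1))%:R * (stirling1 (m + k - 1) (m + l - 1))%:~R
       * (((m + k)%:R - alpha) / 2) ^+ l.

From HB Require Import structures.
From mathcomp Require Import all_boot all_order all_algebra.
From mathcomp Require Import reals.
From mathcomp Require Import zify.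
Import Order.TTheory GRing.Theory Num.Theory.
Local Open Scope ring_scope.

(* Let P_n(z) = prod_{j<n} (z - j), so that s(n,l) is the l-th coefficient of
   P_n.  For m = 2 the binomial weight C(l+1,1) in Q(2,n;alpha) is l+1, so
   Q(2,n;alpha) is the derivative P_{n+1}' evaluated at (n+2-alpha)/2; for
   n = 2k and alpha = 2 this point is the integer k.
   Since k is a simple root of P_{2k+1}, the derivative there is the product
   of the other factors, prod_{j<=2k, j<>k} (k - j), which splits into
   prod_{j<k} (k - j) = k! and prod_{k<j<=2k} (k - j) = (-1)^k k!. *)

Definition falling_poly (n : nat) : {poly int} := \prod_(j < n) ('X - (j%:R)%:P).

Lemma stirling1_coef (n l : nat) : stirling1 n l = (falling_poly n)`_l.
Proof. by []. Qed.

Lemma size_falling_poly (n : nat) : size (falling_poly n) = n.+1.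
Proof. by rewrite size_prod_XsubC /index_enum -enumT size_enum_ord. Qed.

Lemma Q2_deriv (R : realFieldType) (n : nat) (alpha : R) :
  Q 2 n alpha = (map_poly intr (falling_poly n.+1))^`().[((n + 2)%:R - alpha) / 2].
Proof.
have size_deriv : (size (map_poly intr (falling_poly n.+1) : {poly R})^`() <= n.+1)%N.
  rewrite deriv_map (size_map_inj_poly (@intr_inj R)) ?rmorph0 //.
  by rewrite -ltnS -(size_falling_poly n.+1) lt_size_deriv // -size_poly_eq0 size_falling_poly.
rewrite /Q (horner_coef_wide _ size_deriv) addnC; apply: eq_bigr => l _.
rewrite coef_deriv coef_map /= -stirling1_coef mulr_natl.
have -> : (2 + l - 1 = l.+1)%N by lia.
by rewrite addnC bin1.
Qed.

Lemma natr_fact (R : pzSemiRingType) (m : nat) :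
  \prod_(0 <= j < m) ((j.+1)%:R : R) = (m`!)%:R.
Proof. by rewrite fact_prod big_add1 natr_prod big_mkord. Qed.

Lemma prod_sub_below (R : comPzRingType) (m : nat) :
  \prod_(0 <= j < m) ((m%:R : R) - j%:R) = (m`!)%:R.
Proof.
rewrite -natr_fact big_nat_rev /=; apply: eq_big_nat => j /andP [_ lt_jm].
by rewrite add0n -natrB; [congr (_%:R); lia | lia].
Qed.

Lemma prod_sub_above (R : comPzRingType) (m p : nat) :
  \prod_(m.+1 <= j < m.+1 + p) ((m%:R : R) - j%:R) = (-1) ^+ p * (p`!)%:R.
Proof.
rewrite -natr_fact -[m.+1]add0n big_addn add0n addKn.
rewrite -[in (-1) ^+ p](subn0 p) -prodr_const_nat -big_split /=.
apply: eq_big_nat => j _; rewrite mulN1r -opprB -natrB; last by lia.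
by congr (- _%:R); lia.
Qed.

Lemma deriv_prod_XsubC_root (R : comNzRingType) (I : finType) (a : I -> R) (i : I) :
  (\prod_j ('X - (a j)%:P))^`().[a i] = \prod_(j | j != i) (a i - a j).
Proof.
rewrite (bigD1 i) //= derivM derivXsubC mul1r hornerD hornerM hornerXsubC.
rewrite subrr mul0r addr0 horner_prod.
by apply: eq_bigr => j _; rewrite hornerXsubC.
Qed.

Lemma falling_poly_deriv_root (m p : nat) :
  (falling_poly (m + p).+1)^`().[m%:R] = (-1) ^+ p * (m`! * p`!)%:R.
Proof.
have lt_m_n : (m < (m + p).+1)%N by lia.
rewrite [m%:R]/(nat_of_ord (Ordinal lt_m_n))%:R deriv_prod_XsubC_root.
have drop_cond a b : (b <= m \/ m < a)%N ->
    \prod_(a <= j < b | j != m) ((m%:R : int) - j%:R) = \prod_(a <= j < b) ((m%:R : int) - j%:R).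
  move=> out_ab; rewrite big_nat_cond [RHS]big_nat_cond; apply: eq_bigl => j.
  by rewrite andbT; apply/andb_idr => /andP [? ?]; apply/eqP; lia.
rewrite (eq_bigl (fun j : 'I_(m + p).+1 => (j : nat) != m)) //.
rewrite -(big_mkord (fun j => j != m) (fun j => (m%:R : int) - j%:R)).
rewrite (big_cat_nat (n := m)) //=; last by lia.
rewrite [X in _ * X]big_ltn_cond // eqxx /= !drop_cond; [|lia|lia].
by rewrite prod_sub_below -addSn prod_sub_above natrM mulrCA.
Qed.

Theorem mainTheorem11 (R : realType) (k : nat) (hk : (0 < k)%N) :
  Q 2 (2 * k) (2 : R) = (-1) ^+ k * ((k`!)%:R ^+ 2).
Proof.
have root_k : ((2 * k + 2)%:R - 2) / 2 = (k%:R : int)%:~R :> R.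
  by rewrite natrD addrK natrM [2 * _]mulrC mulfK ?pnatr_eq0 ?rmorph_nat.
rewrite Q2_deriv root_k deriv_map horner_map /= mul2n -addnn.
by rewrite falling_poly_deriv_root rmorphM rmorphXn rmorphN1 rmorph_nat natrM expr2.
Qed.
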